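(* Let $\Lambda\Subset\mathbb X$. For a selector $s$, let $\rho_0=\mathbf 1_{\{\varnothing\}}:\mathbf F\to\mathbb C$ and $\rho_{n+1}=K_\Lambda\rho_n$ for $n\in\mathbb N_0$. Then the sequence $(\rho_n)_{n\in\mathbb N_0}$ does not depend on the choice of the selector $s$, and $\rho_n(\varnothing)=1$ for every $n\in\mathbb N_0$.
   Context: $\mathbb X$ is a finite or countably infinite set, $X\Subset\mathbb X$ means finite subset, $\mathbf F$ is the set of finite subsets. Fix $z:\mathbb X\to\mathbb C$, $W:\mathbf F\to\mathbb C$. Conditional interaction: $W(X\mid B)=\prod_{C\subset B}W(X\cup C)$ if $X\cap B=\varnothing$, $W(X\mid B)=0$ if $X=\{y\}$ with $y\in B$, $W(X\mid B)=1$ otherwise. Boltzmann factor $\kappa(X\mid B)=\prod_{\varnothing\neq S\subset X}W(S\mid B)$, $\kappa(s\mid B)=\kappa(\{s\}\mid B)$. Kernel: $\gamma(s,N\mid B)=\sum_{M\subset N}(-1)^{|N\setminus M|}\kappa(s\mid B\cup M)$. A selector is a map $s:\mathbf F\setminus\{\varnothing\}\to\mathbb X$ with $s_X:=s(X)\in X$; put $X'_s=X\setminus\{s_X\}$. For $\rho:\mathbf F\to\mathbb C$, the Kirkwood--Salsburg operator is $(K_\Lambda\rho)(\varnothing)=\rho(\varnothing)$ and, for $X\neq\varnothing$, $(K_\Lambda\rho)(X)=\sum_{N\subset\Lambda\setminus X'_s}z(s_X)\gamma(s_X,N\mid X'_s)\rho(X'_s\cup N)$. *)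

From HB Require Import structures.
From mathcomp Require Import all_boot all_order all_algebra.
From mathcomp Require Import finmap.
From mathcomp Require Import complex.
From mathcomp Require Import reals.
Set Implicit Arguments. Unset Strict Implicit. Unset Printing Implicit Defensive.
Import Order.TTheory GRing.Theory Num.Theory.
Local Open Scope ring_scope.
Local Open Scope fset_scope.

Section KS.
Variables (R : realType) (X : countType).
Local Notation C := (R[i])%C.
Variables (z : X -> C) (W : {fset X} -> C).

Definition Wcond (Y B : {fset X}) : C :=
  if Y `&` B == fset0 then \prod_(D <- fpowerset B) W (Y `|` D)
  else if [exists y : Y, (Y == [fset val y]) && (val y \in B)] then 0
  else 1.

Definition kappa (Y B : {fset X}) : C :=
  \prod_(S <- fpowerset Y | S != fset0) Wcond S B.

Definition gamma (x : X) (N B : {fset X}) : C :=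
  \sum_(M <- fpowerset N) (-1) ^+ #|` (N `\` M)| * kappa [fset x] (B `|` M).

Definition is_selector (s : {fset X} -> X) : Prop :=
  forall Y : {fset X}, Y != fset0 -> s Y \in Y.

Definition KS (s : {fset X} -> X) (Lam : {fset X}) (rho : {fset X} -> C)
  (Y : {fset X}) : C :=
  if Y == fset0 then rho fset0
  else let x := s Y in let Y' := Y `\ x in
       \sum_(N <- fpowerset (Lam `\` Y')) z x * gamma x N Y' * rho (Y' `|` N).

Definition rho0 (Y : {fset X}) : C := if Y == fset0 then 1 else 0.

Fixpoint rho_seq (s : {fset X} -> X) (Lam : {fset X}) (n : nat) : {fset X} -> C :=
  match n with
  | 0 => rho0
  | n.+1 => KS s Lam (rho_seq s Lam n)
  end.

End KS.

From HB Require Import structures.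
From mathcomp Require Import all_boot all_order all_algebra.
From mathcomp Require Import finmap complex reals.
(* Put [weight Y = z^Y kappa(Y | {})] and let [corr k Y] be the sum of [weight (Y `|` N)]
   over the [N] in [Lam `\` Y] with [#|Y `|` N| = k]: the k-point part of the
   finite-volume correlation function.  For every [x \notin B] the weight factorizes
   as [weight (x |` B) = z x * kappa({x} | B) * weight B], and [gamma(x, . | B)] is the
   Moebius inverse of [N |-> kappa({x} | B `|` N)].  Together these give
   [K_Lam (corr k) Y = corr k.+1 Y] for every nonempty [Y], whichever point [x] of [Y]
   the selector removes.  As [K_Lam] is linear and copies the value at the empty set,
   [rho_n] is a linear combination of [corr 0, ..., corr n] whose coefficients do not
   depend on the selector. *)

Set Implicit Arguments.
Unset Strict Implicit.
Unset Printing Implicit Defensive.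
Import GRing.Theory.
Local Open Scope fset_scope.
Local Open Scope ring_scope.

Section Powerset.
Variable T : choiceType.

Lemma fset1_neq0 (x : T) : [fset x] != fset0.
Proof. by apply/fset0Pn; exists x; rewrite fset11. Qed.

Lemma fset1U_neq0 (x : T) (B : {fset T}) : x |` B != fset0.
Proof. by apply/fset0Pn; exists x; rewrite fset1U1. Qed.

Lemma notin_fpowerset (a : T) (A M : {fset T}) :
  a \notin A -> M \in fpowerset A -> a \notin M.
Proof. by move=> aA; rewrite fpowersetE => /fsubsetP MA; apply: contra aA => /MA. Qed.

Lemma big_fpowersetU1 (R : Type) (idx : R) (op : Monoid.com_law idx) (a : T)
    (A : {fset T}) (F : {fset T} -> R) : a \notin A ->
  \big[op/idx]_(M <- fpowerset (a |` A)) F M =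
  op (\big[op/idx]_(M <- fpowerset A) F M)
     (\big[op/idx]_(M <- fpowerset A) F (a |` M)).
Proof.
move=> aA; rewrite (big_fsetID _ (fun M : {fset T} => a \notin M)); congr (op _ _).
  apply: eq_fbigl => M; rewrite !inE /= !fpowersetE.
  apply/andP/idP => [[/fsubsetP MaA aM]|MA]; last first.
    split; first exact: fsubset_trans MA (fsubsetUr _ _).
    by apply: contra aA => /(fsubsetP MA).
  apply/fsubsetP => y yM; have := MaA y yM; rewrite !inE => /orP[/eqP ya|//].
  by rewrite -ya yM in aM.
transitivity (\big[op/idx]_(M <- [fset a |` M | M in fpowerset A]) F M).
  apply: eq_fbigl => M; rewrite !inE /= fpowersetE negbK.
  apply/andP/imfsetP => [[MaA aM]|[M' /= M'A ->]].
    exists (M `\ a); last by rewrite fsetD1K.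
    by rewrite /= fpowersetE -(fsetU1K aA) fsetSD.
  by split; [rewrite fsetUS // -fpowersetE | rewrite fset1U1].
rewrite big_imfset //= => M1 M2 /(notin_fpowerset aA) aM1 /(notin_fpowerset aA) aM2 eqM.
by rewrite -(fsetU1K aM1) eqM fsetU1K.
Qed.

Variable R : comRingType.

Lemma sum_fpowerset_sign (A : {fset T}) :
  \sum_(M <- fpowerset A) (-1 : R) ^+ #|` M| = (A == fset0)%:R.
Proof.
have [->|/fset0Pn[a aA]] := eqVneq A fset0.
  by rewrite fpowerset0 big_seq_fset1 cardfs0 expr0.
have aAa : a \notin A `\ a by rewrite fsetD11.
rewrite -(fsetD1K aA) big_fpowersetU1 // -[RHS](subrr (\sum_(M <- fpowerset (A `\ a))
  (-1 : R) ^+ #|` M|)) -sumrN; congr (_ + _).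
apply: eq_fbigr => M /(notin_fpowerset aAa) aM _.
by rewrite cardfsU1 aM exprS mulN1r.
Qed.

Lemma sum_fpowerset_fpowerset (A : {fset T}) (h : {fset T} -> {fset T} -> R) :
  \sum_(M <- fpowerset A) \sum_(M' <- fpowerset M) h M' M =
  \sum_(M' <- fpowerset A) \sum_(U <- fpowerset (A `\` M')) h M' (M' `|` U).
Proof.
elim/fset1U_rect: A h => [|a A aA IH] h.
  by rewrite fpowerset0 !big_seq_fset1 fsetD0 fpowerset0 !big_seq_fset1 fsetU0.
rewrite !big_fpowersetU1 //=.
have DaA M : a \notin M -> (a |` A) `\` M = a |` (A `\` M).
  move=> aM; apply/fsetP => y; rewrite !inE.
  by case: eqVneq => [->|] //=; rewrite (negbTE aM).
have DaAa M : (a |` A) `\` (a |` M) = A `\` M.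
  apply/fsetP => y; rewrite !inE.
  by case: eqVneq => [->|] //=; rewrite (negbTE aA) andbF.
under [X in _ + X = _]eq_fbigr => M /(notin_fpowerset aA) aM _ do rewrite big_fpowersetU1 //.
under [X in _ = X + _]eq_fbigr => M /(notin_fpowerset aA) aM _.
  rewrite DaA // big_fpowersetU1 ?inE ?(negbTE aA) ?andbF //=.
  over.
rewrite !big_split /= IH -addrA; congr (_ + _).
rewrite !IH; congr (_ + _).
  by apply: eq_fbigr => M _ _; apply: eq_bigr => U _; rewrite fsetUCA.
by apply: eq_fbigr => M _ _; rewrite DaAa; apply: eq_bigr => U _; rewrite fsetUA.
Qed.

Lemma sum_fpowerset_moebius (N : {fset T}) (f : {fset T} -> R) :
  \sum_(M <- fpowerset N) \sum_(M' <- fpowerset M)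
     (-1) ^+ #|` (M `\` M')| * f M' = f N.
Proof.
rewrite (sum_fpowerset_fpowerset N (fun M' M => (-1) ^+ #|` (M `\` M')| * f M')).
transitivity (\sum_(M <- fpowerset N) ((N `\` M) == fset0)%:R * f M).
  apply: eq_fbigr => M _ _; rewrite -sum_fpowerset_sign mulr_suml.
  apply: eq_fbigr => U; rewrite fpowersetE => /fsubsetP UNM _.
  congr (_ ^+ #|` _| * _); apply/fsetP => y; rewrite !inE.
  case yU: (y \in U); rewrite ?orbF ?orbT /= ?andNb //.
  by have := UNM y yU; rewrite !inE => /andP[-> _].
rewrite (big_fsetD1 N) ?fpowersetE //= fsetDv eqxx mul1r big1_fset ?addr0 // => M.
rewrite !inE fpowersetE fsetD_eq0 => /andP[neqMN subMN] _.
by rewrite eqEfsubset subMN /= in neqMN; rewrite (negbTE neqMN) mul0r.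
Qed.
End Powerset.

Section KirkwoodSalsburg.
Variables (R : realType) (X : countType).
Local Notation C := (R[i])%C.
Variables (z : X -> C) (W : {fset X} -> C) (Lam : {fset X}).

Lemma Wcond_fset0 (S : {fset X}) : Wcond W S fset0 = W S.
Proof. by rewrite /Wcond fsetI0 eqxx fpowerset0 big_seq_fset1 fsetU0. Qed.

Lemma kappa_fset1 (x : X) (B : {fset X}) : kappa W [fset x] B = Wcond W [fset x] B.
Proof.
rewrite /kappa big_mkcond -[[fset x]]fsetU0 big_fpowersetU1 ?inE //=.
by rewrite fpowerset0 !big_seq_fset1 eqxx fsetU0 fset1_neq0 mul1r.
Qed.

Lemma kappa_fset1_in (x : X) (B : {fset X}) : x \in B -> kappa W [fset x] B = 0.
Proof.
move=> xB; rewrite kappa_fset1 /Wcond fsetIC fsetI1 xB (negbTE (fset1_neq0 x)).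
suff -> : [exists y : [fset x], ([fset x] == [fset val y]) && (val y \in B)] by [].
by apply/existsP; exists [` fset11 x]; rewrite /= eqxx xB.
Qed.

Lemma kappa_fset1_notin (x : X) (B : {fset X}) : x \notin B ->
  kappa W [fset x] B = \prod_(D <- fpowerset B) W (x |` D).
Proof. by move=> xB; rewrite kappa_fset1 /Wcond fsetIC fsetI1 (negbTE xB) eqxx. Qed.

Lemma kappa_fsetU1 (x : X) (B : {fset X}) : x \notin B ->
  kappa W (x |` B) fset0 = kappa W [fset x] B * kappa W B fset0.
Proof.
move=> xB; rewrite kappa_fset1_notin // /kappa big_mkcond big_fpowersetU1 //= mulrC.
congr (_ * _); last by rewrite -big_mkcond.
by apply: eq_bigr => S _; rewrite fset1U_neq0 Wcond_fset0.
Qed.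

Definition weight (Y : {fset X}) : C := (\prod_(y <- Y) z y) * kappa W Y fset0.

Lemma weight0 : weight fset0 = 1.
Proof.
by rewrite /weight big_seq_fset0 /kappa big_mkcond fpowerset0 big_seq_fset1 mul1r.
Qed.

Lemma weight_fsetU1 (x : X) (B : {fset X}) : x \notin B ->
  weight (x |` B) = z x * kappa W [fset x] B * weight B.
Proof.
move=> xB; rewrite /weight big_fsetU1 //= kappa_fsetU1 //.
by rewrite -!mulrA (mulrCA (\prod_(y <- B) z y)).
Qed.

Definition weightn (k : nat) (Y : {fset X}) : C :=
  if #|` Y| == k then weight Y else 0.

Definition corr (k : nat) (Y : {fset X}) : C :=
  \sum_(N <- fpowerset (Lam `\` Y)) weightn k (Y `|` N).

Lemma corr0 (Y : {fset X}) : corr 0 Y = (Y == fset0)%:R.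
Proof.
rewrite /corr (big_fsetD1 fset0) ?fpowersetE ?fsub0set //= fsetU0 big1_fset ?addr0.
  by rewrite /weightn cardfs_eq0; case: eqP => [->|]; rewrite ?weight0.
move=> N; rewrite !inE => /andP[N0 _] _.
by rewrite /weightn cardfs_eq0 fsetU_eq0 (negbTE N0) andbF.
Qed.

Lemma weightn_fsetU1 (k : nat) (x : X) (B : {fset X}) : x \notin B ->
  z x * kappa W [fset x] B * weightn k B = weightn k.+1 (x |` B).
Proof.
move=> xB; rewrite /weightn cardfsU1 xB add1n eqSS weight_fsetU1 //.
by case: (_ == k)%N; rewrite ?mulr0.
Qed.

Lemma sum_gamma_fpowerset (x : X) (A B : {fset X}) (h : {fset X} -> C) :
  \sum_(N <- fpowerset A) gamma W x N B * \sum_(U <- fpowerset (A `\` N)) h (N `|` U) =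
  \sum_(N <- fpowerset A) kappa W [fset x] (B `|` N) * h N.
Proof.
under eq_bigr do rewrite mulr_sumr.
rewrite -(sum_fpowerset_fpowerset A (fun N M => gamma W x N B * h M)).
apply: eq_bigr => M _; rewrite -mulr_suml; congr (_ * _).
exact: (sum_fpowerset_moebius M (fun M' => kappa W [fset x] (B `|` M'))).
Qed.

Lemma KS_corr (s : {fset X} -> X) (k : nat) (Y : {fset X}) :
  is_selector s -> Y != fset0 -> KS z W s Lam (corr k) Y = corr k.+1 Y.
Proof.
move=> sel Y0; have xY := sel Y Y0; rewrite /KS (negbTE Y0) /=.
set x := s Y in xY *; set Y' := Y `\ x; set A := Lam `\` Y'.
transitivity (z x * \sum_(N <- fpowerset A)
    gamma W x N Y' * \sum_(U <- fpowerset (A `\` N)) weightn k (Y' `|` (N `|` U))).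
  rewrite mulr_sumr; apply: eq_bigr => N _; rewrite /corr -fsetDDl -mulrA.
  by congr (_ * (_ * _)); apply: eq_bigr => U _; rewrite fsetUA.
rewrite (sum_gamma_fpowerset x A Y' (fun M => weightn k (Y' `|` M))) mulr_sumr.
have weightn_Y N : N \in fpowerset (Lam `\` Y) ->
    z x * (kappa W [fset x] (Y' `|` N) * weightn k (Y' `|` N)) = weightn k.+1 (Y `|` N).
  rewrite fpowersetE => /fsubsetP NLY.
  have xN : x \notin N by apply/negP => /NLY; rewrite inE xY.
  by rewrite mulrA weightn_fsetU1 ?fsetUA ?fsetD1K // !inE eqxx xN.
have -> : A = (Lam `\` Y) `|` (if x \in Lam then [fset x] else fset0).
  by rewrite /A fsetDDr fsetI1.
rewrite /corr; case: ifP => xL; last by rewrite fsetU0; apply: eq_fbigr => N /weightn_Y.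
rewrite fsetUC big_fpowersetU1 ?inE ?xY //= [X in _ + X]big1_fset ?addr0; last first.
  by move=> N _ _; rewrite kappa_fset1_in ?mul0r ?mulr0 // !inE eqxx orbT.
by apply: eq_fbigr => N /weightn_Y.
Qed.

Lemma eq_KS (s : {fset X} -> X) (rho1 rho2 : {fset X} -> C) (Y : {fset X}) :
  rho1 =1 rho2 -> KS z W s Lam rho1 Y = KS z W s Lam rho2 Y.
Proof.
move=> rho12; rewrite /KS rho12; case: ifP => //= _.
by apply: eq_bigr => N _; rewrite rho12.
Qed.

Lemma KS_sum (s : {fset X} -> X) (n : nat) (c : nat -> C)
    (rho : nat -> {fset X} -> C) (Y : {fset X}) :
  KS z W s Lam (fun Y => \sum_(k < n) c k * rho k Y) Y =
  \sum_(k < n) c k * KS z W s Lam (rho k) Y.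
Proof.
rewrite /KS; case: ifP => //= _; under eq_bigr do rewrite mulr_sumr.
rewrite exchange_big; apply: eq_bigr => k _; rewrite mulr_sumr.
by apply: eq_bigr => N _; rewrite mulrCA.
Qed.

Lemma rho_seq_corr_expansion (n : nat) : exists c : nat -> C,
  forall s, is_selector s -> forall Y : {fset X},
  rho_seq z W s Lam n Y = \sum_(k < n.+1) c k * corr k Y.
Proof.
elim: n => [|n [c rhoE]].
  by exists (fun=> 1) => s _ Y; rewrite big_ord1 mul1r corr0 /= /rho0; case: eqP.
exists (fun k => if k is k'.+1 then c k'
  else \sum_(k < n.+1) c k * (corr k fset0 - corr k.+1 fset0)).
move=> s sel Y /=; rewrite (eq_KS _ _ (rhoE s sel)) KS_sum [RHS]big_ord_recl corr0 /=.
have [->|Y0] := eqVneq Y fset0.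
  rewrite mulr1 -big_split /=; apply: eq_bigr => k _.
  by rewrite /KS eqxx mulrBr subrK.
rewrite mulr0 add0r; apply: eq_bigr => k _.
by rewrite KS_corr.
Qed.
End KirkwoodSalsburg.

Theorem lemma6p2 (R : realType) (X : countType) (z : X -> (R[i])%C)
  (W : {fset X} -> (R[i])%C) (Lam : {fset X}) :
  (forall s1 s2 : {fset X} -> X, is_selector s1 -> is_selector s2 ->
     forall (n : nat) (Y : {fset X}),
       rho_seq z W s1 Lam n Y = rho_seq z W s2 Lam n Y) /\
  (forall s : {fset X} -> X, is_selector s ->
     forall n : nat, rho_seq z W s Lam n fset0 = 1).
Proof.
split=> [s1 s2 sel1 sel2 n Y|s _ n].
  by have [c rhoE] := rho_seq_corr_expansion z W Lam n; rewrite rhoE // rhoE.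
by elim: n => [|n IHn] /=; rewrite /rho0 ?eqxx // /KS eqxx.
Qed.
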